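(* Let $X$ be an orbifold, $Y\to X$ its orbifold universal cover and $G=\pi_1^{orb}(X)$, acting on $Y$ with $X=Y/G$. Let $\alpha$ be a U(1)-valued 2-cocycle on $G$ (normalized, $\alpha_{g,hk}\alpha_{h,k}=\alpha_{g,h}\alpha_{gh,k}$), with phase $\gamma(\alpha)_{g,h}=\alpha_{g,h}\alpha_{h,g}^{-1}$. For $1\ne g\in G$ with nonempty fixed locus $Y_g$, let $L_g=Y_g\times_{L^\alpha_g}\mathbb C$ be the flat complex orbifold line bundle over $Y_g/C(g)$ obtained as the quotient of $Y_g\times\mathbb C$ by $C(g)$ acting via $h\cdot(y,v)=(hy,\gamma(\alpha)_{g,h}v)$. Then: (1) for every $t\in G$, the map $t\times\mathrm{Id}:Y_g\times\mathbb C\to Y_{tgt^{-1}}\times\mathbb C$ induces an isomorphism $L_g\cong L_{tgt^{-1}}$ (covering the identification $Y_g/C(g)\cong Y_{tgt^{-1}}/C(tgt^{-1})$ induced by $t$); so $L_g$ depends only on the conjugacy class $(g)$ and may be denoted $L_{(g)}$; (2) $L_{(g)}^{-1}\cong L_{(g^{-1})}$ (over $Y_g/C(g)=Y_{g^{-1}}/C(g^{-1})$); (3) for $g_1,\dots,g_k\in G$, over $Y_{g_1}\cap\dots\cap Y_{g_k}/C(g_1,\dots,g_k)$ (with $C(g_1,\dots,g_k)$ the common centralizer), the pullbacks satisfy $L_{(g_1,\dots,g_k)}\cong L_{(g_1)}\otimes\cdots\otimes L_{(g_k)}$, where $L_{(g_1,\dots,g_k)}=(Y_{g_1}\cap\dots\cap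 Y_{g_k})\times_{\gamma_{g_1\cdots g_k}}\mathbb C$ is defined using the character $h\mapsto\gamma(\alpha)_{g_1\cdots g_k,h}$ of $C(g_1,\dots,g_k)$.
   Context: An orbifold covering $f:Y\to X$ is a smooth map which locally looks like $U/G_p\to U/\Gamma$ with $G_p\subset\Gamma$ a subgroup, and such that over a chart $U_q/G_q$ of $X$ each component of the preimage is $U_q/\Gamma'$ with $\Gamma'\subset G_q$. The orbifold universal cover is a connected orbifold cover factoring through every orbifold cover; it exists (Thurston), and its deck group is the orbifold fundamental group $\pi_1^{orb}(X)$. For $h\in C(g)$ the map $h\mapsto\gamma(\alpha)_{g,h}$ is a homomorphism $C(g)\to U(1)$, denoted $L^\alpha_g$. *)

From HB Require Import structures.
From mathcomp Require Import all_boot all_order all_algebra.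
From mathcomp Require Import reals.
From mathcomp Require Import complex.
Set Implicit Arguments. Unset Strict Implicit. Unset Printing Implicit Defensive.
Import Order.TTheory GRing.Theory Num.Theory.
Local Open Scope ring_scope.

(* An abstract (possibly infinite) group, e.g. pi_1^orb(X). *)
Record Grp := {
  gcar :> Type;
  gmul : gcar -> gcar -> gcar;
  gone : gcar;
  ginv : gcar -> gcar;
  gmulA : forall x y z, gmul x (gmul y z) = gmul (gmul x y) z;
  gmul1g : forall x, gmul gone x = x;
  gmulg1 : forall x, gmul x gone = x;
  gmulVg : forall x, gmul (ginv x) x = gone;
  gmulgV : forall x, gmul x (ginv x) = gone
}.

Section Defs.
Variable G : Grp.
Variable R : realType.

Definition is_action (Y : Type) (act : G -> Y -> Y) :=
  (forall y, act (gone G) y = y) /\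
  (forall g h y, act (gmul g h) y = act g (act h y)).

Definition U1_cocycle (a : G -> G -> R[i]) :=
  (forall g h k, a g (gmul h k) * a h k = a g h * a (gmul g h) k) /\
  (forall g, a (gone G) g = 1 /\ a g (gone G) = 1) /\
  (forall g h, `|a g h| = 1).

Definition phase (a : G -> G -> R[i]) (g h : G) : R[i] := a g h / a h g.

Definition fixedY (Y : Type) (act : G -> Y -> Y) (g : G) (y : Y) := act g y = y.

Definition centr (g h : G) := gmul h g = gmul g h.

Definition conjg' (t g : G) : G := gmul (gmul t g) (ginv t).

(* action of h in C(g) on Y_g x C defining L_g = Y_g x_{L^alpha_g} C *)
Definition Lact (Y : Type) (act : G -> Y -> Y) (a : G -> G -> R[i]) (g h : G)
  (p : Y * R[i]) : Y * R[i] := (act h p.1, phase a g h * p.2).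

Definition Ldual_act (Y : Type) (act : G -> Y -> Y) (a : G -> G -> R[i]) (g h : G)
  (p : Y * R[i]) : Y * R[i] := (act h p.1, (phase a g h)^-1 * p.2).

(* action defining L_(g1) (x) ... (x) L_(gk) on Y_{g1} cap ... cap Y_{gk} x C
   (tensor product of the lines C is identified with C, characters multiply) *)
Definition Ltensor_act (Y : Type) (act : G -> Y -> Y) (a : G -> G -> R[i])
  (gs : seq G) (h : G) (p : Y * R[i]) : Y * R[i] :=
  (act h p.1, foldr (fun g acc => phase a g h * acc) 1 gs * p.2).

Definition gprod (gs : seq G) : G := foldr (@gmul G) (gone G) gs.
End Defs.

(* Everything reduces to two properties of the phase
   gamma(g, h) = alpha(g, h) / alpha(h, g) on commuting pairs, each a short
   computation with the cocycle identity: gamma(-, h) is multiplicative on the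
   centralizer of h, and gamma is invariant under simultaneous conjugation.
   The first gives (2) and (3), the second gives (1). *)
From HB Require Import structures.
From mathcomp Require Import all_boot all_order all_algebra.
From mathcomp Require Import reals.
From mathcomp Require Import complex.
From mathcomp Require Import ring.
From Stdlib Require List.
Set Implicit Arguments. Unset Strict Implicit. Unset Printing Implicit Defensive.
Import Order.TTheory GRing.Theory Num.Theory.
Local Open Scope ring_scope.

Declare Scope grp_scope.
Delimit Scope grp_scope with g.
Local Notation "x * y" := (gmul x y) : grp_scope.
Local Notation "x ^-1" := (ginv x) : grp_scope.

Section GroupFacts.
Variable G : Grp.
Local Open Scope grp_scope.

Lemma ginvK (g : G) : g^-1^-1 = g.
Proof. by rewrite -[g^-1^-1]gmulg1 -(gmulVg g) gmulA gmulVg gmul1g. Qed.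

Lemma conjgM (t x y : G) : conjg' t (x * y) = conjg' t x * conjg' t y.
Proof.
by rewrite /conjg' -!gmulA [t^-1 * (t * _)]gmulA gmulVg gmul1g.
Qed.

Lemma conjgK (t x : G) : conjg' t^-1 (conjg' t x) = x.
Proof. by rewrite /conjg' ginvK -!gmulA gmulVg gmulg1 !gmulA gmulVg gmul1g. Qed.

Lemma conjg_mulr (t x : G) : conjg' t x * t = t * x.
Proof. by rewrite /conjg' -gmulA gmulVg gmulg1. Qed.

Lemma centrV (g h : G) : centr g h -> centr g^-1 h.
Proof.
rewrite /centr => cgh.
rewrite -[h * g^-1]gmul1g -(gmulVg g) -!gmulA [g * (h * _)]gmulA -cgh.
by rewrite -gmulA gmulgV gmulg1.
Qed.

Lemma centrVE (g h : G) : centr g h <-> centr g^-1 h.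
Proof. by split=> [|/centrV]; [exact: centrV | rewrite ginvK]. Qed.

Lemma centr_conjgE (t g h : G) : centr g h <-> centr (conjg' t g) (conjg' t h).
Proof.
rewrite /centr -!conjgM; split=> [-> // | e].
by rewrite -(conjgK t (h * g)) e conjgK.
Qed.

Lemma centr_gprod (gs : seq G) (h : G) :
  (forall g, List.In g gs -> centr g h) -> centr (gprod gs) h.
Proof.
elim: gs => [|g gs IH] cs; first by rewrite /centr /gprod /= gmul1g gmulg1.
have cgsh := IH (fun x gs_x => cs x (or_intror gs_x)).
rewrite /centr /gprod /= -/(gprod gs) gmulA (cs g (or_introl erefl)) -gmulA.
by rewrite cgsh gmulA.
Qed.

End GroupFacts.

Section ActionFacts.
Variables (G : Grp) (Y : Type) (act : G -> Y -> Y).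
Hypothesis Hact : is_action act.
Local Open Scope grp_scope.

Lemma actM (g h : G) (y : Y) : act (g * h) y = act g (act h y).
Proof. by case: Hact. Qed.

Lemma actK (t : G) : cancel (act t) (act t^-1).
Proof. by case: Hact => act1 _ y; rewrite -actM gmulVg act1. Qed.

Lemma actKV (t : G) : cancel (act t^-1) (act t).
Proof. by move=> y; rewrite -{1}(ginvK t) actK. Qed.

Lemma act_inj (t : G) : injective (act t).
Proof. exact: can_inj (actK t). Qed.

Lemma fixedY_conjg (t g : G) (y : Y) :
  fixedY act g y -> fixedY act (conjg' t g) (act t y).
Proof. by rewrite /fixedY => fy; rewrite -actM conjg_mulr actM fy. Qed.

Lemma fixedY_conjg_onto (t g : G) (y' : Y) : fixedY act (conjg' t g) y' ->
  exists y, fixedY act g y /\ act t y = y'.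
Proof.
move=> /(fixedY_conjg t^-1); rewrite conjgK => fy.
by exists (act t^-1 y'); rewrite actKV.
Qed.

Lemma fixedYVE (g : G) (y : Y) : fixedY act g y <-> fixedY act g^-1 y.
Proof.
rewrite /fixedY; split=> fy; first by rewrite -{1}fy actK.
by rewrite -{1}fy actKV.
Qed.

End ActionFacts.

Section Phase.
Variables (R : realType) (G : Grp) (a : G -> G -> R[i]).
Hypothesis Ha : U1_cocycle a.

Lemma cocycle_neq0 (x y : G) : a x y != 0.
Proof.
case: Ha => _ [_ norm1]; apply: contra_eq_neq (norm1 x y) => ->.
by rewrite normr0 eq_sym oner_neq0.
Qed.

Lemma cocycle (x y z : G) : a x (y * z)%g * a y z = a x y * a (x * y)%g z.
Proof. by case: Ha. Qed.

Lemma cocycle_mulr (x y z : G) : a x (y * z)%g = a x y * a (x * y)%g z / a y z.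
Proof. by rewrite -cocycle mulfK ?cocycle_neq0. Qed.

Lemma cocycle_mull (x y z : G) : a (x * y)%g z = a x (y * z)%g * a y z / a x y.
Proof. by rewrite cocycle [a x y * _]mulrC mulfK ?cocycle_neq0. Qed.

Lemma cocycle_lift (x y z : G) : a x y = a x (y * z)%g * a y z / a (x * y)%g z.
Proof. by rewrite cocycle mulfK ?cocycle_neq0. Qed.

Lemma phase_neq0 (g h : G) : phase a g h != 0.
Proof. by rewrite mulf_neq0 ?invr_eq0 ?cocycle_neq0. Qed.

Lemma phase1g (h : G) : phase a (gone G) h = 1.
Proof. by case: Ha => _ [a1 _]; rewrite /phase (proj1 (a1 h)) (proj2 (a1 h)) divr1. Qed.

Lemma phaseMl (g k h : G) : centr g h -> centr k h ->
  phase a (g * k)%g h = phase a g h * phase a k h.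
Proof.
rewrite /phase => cgh ckh.
rewrite cocycle_mull (cocycle_mulr h g k) -ckh cgh cocycle_mulr.
by field; rewrite !cocycle_neq0.
Qed.

Lemma phaseVl (g h : G) : centr g h -> phase a (g^-1)%g h = (phase a g h)^-1.
Proof.
move=> cgh; apply: (mulIf (phase_neq0 g h)).
by rewrite -phaseMl ?gmulVg ?phase1g ?mulVf ?phase_neq0 //; exact: centrV.
Qed.

Lemma phase_intertwined (t g h g' h' : G) : (g' * t)%g = (t * g)%g ->
  (h' * t)%g = (t * h)%g -> centr g h -> centr g' h' ->
  phase a g' h' = phase a g h.
Proof.
rewrite /centr /phase => g't h't cgh cgh'.
rewrite (cocycle_lift g' h' t) (cocycle_lift h' g' t) cgh' g't h't.
rewrite (cocycle_mulr g') (cocycle_mulr h') g't h't.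
rewrite (cocycle_mull t g) (cocycle_mull t h) cgh.
by field; rewrite !cocycle_neq0.
Qed.

Lemma phase_conjg (t g h : G) : centr g h ->
  phase a (conjg' t g) (conjg' t h) = phase a g h.
Proof.
move=> cgh; apply: (phase_intertwined (t := t)); rewrite ?conjg_mulr //.
exact: iffLR (centr_conjgE t g h) cgh.
Qed.

Lemma phase_gprod (gs : seq G) (h : G) :
  (forall g, List.In g gs -> centr g h) ->
  phase a (gprod gs) h = foldr (fun g acc => phase a g h * acc) 1 gs.
Proof.
elim: gs => [|g gs IH] cs; first exact: phase1g.
have cgsh x : List.In x gs -> centr x h by move=> gs_x; apply: cs; right.
rewrite /= -/(gprod gs) phaseMl ?IH //; last exact: centr_gprod.
by apply: cs; left.
Qed.

End Phase.

Theorem lemma4p2 (R : realType) (G : Grp) (Y : Type) (act : G -> Y -> Y)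
  (Hact : is_action act) (a : G -> G -> R[i]) (Ha : U1_cocycle a) :
  (* (1) t x Id : Y_g x C -> Y_{tgt^-1} x C is a bijection, intertwining the
         C(g)-action defining L_g with the C(tgt^-1)-action defining
         L_{tgt^-1} along h |-> tht^-1; hence it induces L_g ~= L_{tgt^-1} *)
  (forall g t : G, g <> gone G -> (exists y, fixedY act g y) ->
     (forall y, fixedY act g y -> fixedY act (conjg' t g) (act t y)) /\
     (forall y', fixedY act (conjg' t g) y' ->
        exists y, fixedY act g y /\ act t y = y') /\
     (forall y1 y2, act t y1 = act t y2 -> y1 = y2) /\
     (forall h, centr g h <-> centr (conjg' t g) (conjg' t h)) /\
     (forall h (p : Y * R[i]), centr g h -> fixedY act g p.1 ->
        (act t (Lact act a g h p).1, (Lact act a g h p).2)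
        = Lact act a (conjg' t g) (conjg' t h) (act t p.1, p.2))) /\
  (* (2) L_(g)^{-1} ~= L_(g^{-1}) over Y_g/C(g) = Y_{g^-1}/C(g^-1), via the identity *)
  (forall g : G, g <> gone G -> (exists y, fixedY act g y) ->
     (forall y, fixedY act g y <-> fixedY act (ginv g) y) /\
     (forall h, centr g h <-> centr (ginv g) h) /\
     (forall h (p : Y * R[i]), centr g h -> fixedY act g p.1 ->
        Ldual_act act a g h p = Lact act a (ginv g) h p)) /\
  (* (3) L_(g1,...,gk) ~= L_(g1) (x) ... (x) L_(gk) over
         (Y_{g1} cap ... cap Y_{gk}) / C(g1,...,gk), via the identity *)
  (forall (gs : seq G) h (p : Y * R[i]),
     (forall g, List.In g gs -> centr g h) ->
     (forall g, List.In g gs -> fixedY act g p.1) ->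
     Lact act a (gprod gs) h p = Ltensor_act act a gs h p).
Proof.
split; [|split].
- move=> g t _ _; split; [|split; [|split; [|split]]].
  + exact: fixedY_conjg.
  + exact: fixedY_conjg_onto.
  + exact: act_inj.
  + exact: centr_conjgE.
  + move=> h [y v] cgh _.
    by rewrite /Lact phase_conjg // -!actM // conjg_mulr.
- move=> g _ _; split; [|split].
  + exact: fixedYVE.
  + exact: centrVE.
  + by move=> h [y v] cgh _; rewrite /Ldual_act /Lact phaseVl.
- by move=> gs h [y v] cs _; rewrite /Lact /Ltensor_act phase_gprod.
Qed.
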